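(* Let $G$ and $N$ be finitely presented groups, $Q$ a finite group, and $H$ an $N$ by $Q$ extension with transversal map $s:Q\to H$. The following are equivalent: (1) there is a surjective homomorphism $G\to H$; (2) there are homomorphisms $\tau:G\to Q$ and $\kappa:G\to H$ such that (a) $\tau$ is surjective, (b) for all $g\in G$, if $\kappa(g)=n\,s(q)$ with $n\in N$, $q\in Q$, then $q=\tau(g)$, and (c) for every $n\in N$ there exists $g\in\ker(\tau)$ with $\kappa(g)=n\,s(1_Q)$.
   Context: $H$ is an $N$ by $Q$ extension if $N$ is a normal subgroup of $H$ with $H/N\cong Q$; write $\pi_Q:H\to Q$ for the resulting epimorphism. A transversal map is a map $s:Q\to H$ with $\pi_Q(s(q))=q$ for all $q$ (so its image meets each coset of $N$ exactly once), chosen with $s(1_Q)=1_H$; every element of $H$ is uniquely $n\,s(q)$ with $n\in N$, $q\in Q$. *)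

From Stdlib Require Import List.
From mathcomp Require Import all_boot.
Set Implicit Arguments.
Unset Strict Implicit.
Unset Printing Implicit Defensive.

Record group := Group {
  carrier :> Type;
  gmul : carrier -> carrier -> carrier;
  gone : carrier;
  ginv : carrier -> carrier;
  gmulA : forall x y z, gmul x (gmul y z) = gmul (gmul x y) z;
  gmul1 : forall x, gmul gone x = x;
  gmulV : forall x, gmul (ginv x) x = gone
}.

Arguments gmul {g} _ _.
Arguments gone {g}.
Arguments ginv {g} _.

Definition is_hom (G H : group) (f : G -> H) : Prop :=
  forall x y : G, f (gmul x y) = gmul (f x) (f y).

Definition surj (A B : Type) (f : A -> B) : Prop := forall y, exists x, f x = y.

Definition finite_group (G : group) : Prop :=
  exists l : list G, forall x : G, List.In x l.

(* Words in n generators: a letter (i, b) stands for x_i if b = false, x_i^-1 if b = true. *)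
Definition eval_word (G : group) (n : nat) (gen : 'I_n -> G)
    (w : seq ('I_n * bool)) : G :=
  foldr (fun p acc => gmul (if p.2 then ginv (gen p.1) else gen p.1) acc) gone w.

(* G is finitely presented: G is generated by finitely many elements gen
   satisfying finitely many relators R, and <gen | R> has the universal
   property of the presented group (von Dyck): any assignment of the
   generators in any group satisfying the relators extends to a
   homomorphism.  This is equivalent to G ~= F_n / <<R>>. *)
Definition finitely_presented (G : group) : Prop :=
  exists (n : nat) (gen : 'I_n -> G) (R : seq (seq ('I_n * bool))),
    (forall x : G, exists w, eval_word gen w = x) /\
    (forall r, r \in R -> eval_word gen r = gone) /\
    (forall (K : group) (k : 'I_n -> K),
        (forall r, r \in R -> eval_word k r = gone) ->
        exists f : G -> K, is_hom f /\ forall i, f (gen i) = k i).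

(* H is an N by Q extension: iota : N -> H injective hom, piQ : H -> Q
   surjective hom, and the image of iota is exactly ker piQ
   (so N is identified with a normal subgroup of H and H/N ~= Q). *)
Definition group_extension (N H Q : group) (iota : N -> H) (piQ : H -> Q) : Prop :=
  [/\ is_hom iota, injective iota, is_hom piQ, surj piQ &
      forall h : H, piQ h = gone <-> exists n : N, iota n = h].

Definition transversal_map (H Q : group) (piQ : H -> Q) (s : Q -> H) : Prop :=
  (forall q : Q, piQ (s q) = q) /\ s gone = gone.

(* The image of a homomorphism kappa : G -> H is all of H as soon as it contains
   N and maps onto Q = H/N.  Condition (b) says exactly that piQ \o kappa = tau,
   so (a) makes the image meet every coset of N, and (c) (with s 1 = 1) puts N
   in the image.  Conversely a surjection f gives tau := piQ \o f and
   kappa := f. *)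
From mathcomp Require Import all_boot.

Set Implicit Arguments.
Unset Strict Implicit.

Section GroupLemmas.
Variable G : group.
Implicit Types x y : G.

Lemma gmulgV x : gmul x (ginv x) = gone.
Proof.
rewrite -[gmul x (ginv x)]gmul1 -{1}(gmulV (ginv x)) -gmulA.
by rewrite (gmulA (ginv x)) gmulV gmul1 gmulV.
Qed.

Lemma gmulg1 x : gmul x gone = x.
Proof. by rewrite -(gmulV x) gmulA gmulgV gmul1. Qed.

Lemma gmulgKV x y : gmul (gmul x (ginv y)) y = x.
Proof. by rewrite -gmulA gmulV gmulg1. Qed.

Lemma ginv_unique x y : gmul x y = gone -> x = ginv y.
Proof. by move=> xy1; rewrite -[x]gmulg1 -(gmulgV y) gmulA xy1 gmul1. Qed.

End GroupLemmas.

Section Homomorphisms.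
Variables (G H : group) (f : G -> H).
Hypothesis f_hom : is_hom f.

Lemma hom1 : f gone = gone.
Proof.
have f1_idem : gmul (f gone) (f gone) = f gone by rewrite -f_hom gmul1.
by rewrite -[f gone]gmul1 -(gmulV (f gone)) -gmulA f1_idem.
Qed.

Lemma homV x : f (ginv x) = ginv (f x).
Proof. by apply: ginv_unique; rewrite -f_hom gmulV hom1. Qed.

End Homomorphisms.

Section Extension.
Variables (N H Q : group) (iota : N -> H) (piQ : H -> Q) (s : Q -> H).
Hypothesis ext : group_extension iota piQ.
Hypothesis s_transversal : transversal_map piQ s.

Lemma piQ_iota n : piQ (iota n) = gone.
Proof. by case: ext => _ _ _ _ ker; apply/ker; exists n. Qed.

Lemma piQ_iota_transversal n q : piQ (gmul (iota n) (s q)) = q.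
Proof.
case: ext s_transversal => _ _ piQ_hom _ _ [s_section _].
by rewrite piQ_hom piQ_iota s_section gmul1.
Qed.

Lemma extension_decomposition h : exists n, h = gmul (iota n) (s (piQ h)).
Proof.
case: ext s_transversal => _ _ piQ_hom _ ker [s_section _].
have : piQ (gmul h (ginv (s (piQ h)))) = gone.
  by rewrite piQ_hom (homV piQ_hom) s_section gmulgV.
by case/ker=> n iota_n; exists n; rewrite iota_n gmulgKV.
Qed.

Lemma surj_hom_to_extension (G : group) (kappa : G -> H) :
    is_hom kappa -> (forall n, exists g, kappa g = iota n) ->
    surj (fun g => piQ (kappa g)) -> surj kappa.
Proof.
case: ext => iota_hom _ piQ_hom _ ker kappa_hom N_in_image onto_Q h.
have [g1 same_coset] := onto_Q (piQ h).
have : piQ (gmul h (ginv (kappa g1))) = gone.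
  by rewrite piQ_hom (homV piQ_hom) same_coset gmulgV.
case/ker=> n iota_n; have [g2 kappa_g2] := N_in_image n.
by exists (gmul g2 g1); rewrite kappa_hom kappa_g2 iota_n gmulgKV.
Qed.

End Extension.

Theorem lemma2p5 (G N Q H : group) (iota : N -> H) (piQ : H -> Q) (s : Q -> H) :
  finitely_presented G -> finitely_presented N -> finite_group Q ->
  group_extension iota piQ -> transversal_map piQ s ->
  ((exists f : G -> H, is_hom f /\ surj f) <->
   (exists (tau : G -> Q) (kappa : G -> H),
      [/\ is_hom tau, is_hom kappa,
          surj tau,
          (forall (g : G) (n : N) (q : Q), kappa g = gmul (iota n) (s q) -> q = tau g) &
          (forall n : N, exists g : G, tau g = gone /\ kappa g = gmul (iota n) (s gone))])).
Proof.
move=> _ _ _ ext s_tr; have [_ _ piQ_hom piQ_onto _] := ext; have [_ s1] := s_tr.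
split=> [[f [f_hom f_onto]] | [tau [kappa [_ kappa_hom tau_onto coset_tau N_image]]]].
  exists (fun g => piQ (f g)), f; split=> //.
  - by move=> x y; rewrite f_hom piQ_hom.
  - by move=> q; have [h <-] := piQ_onto q; have [g <-] := f_onto h; exists g.
  - by move=> g n q ->; rewrite (piQ_iota_transversal ext s_tr).
  - move=> n; have [g kappa_g] := f_onto (gmul (iota n) (s gone)).
    by exists g; rewrite kappa_g (piQ_iota_transversal ext s_tr).
have piQ_kappa g : piQ (kappa g) = tau g.
  by have [n /coset_tau] := extension_decomposition ext s_tr (kappa g).
exists kappa; split=> //; apply: (surj_hom_to_extension ext) => // [n | q].
  by have [g [_ kappa_g]] := N_image n; exists g; rewrite kappa_g s1 gmulg1.
by have [g <-] := tau_onto q; exists g.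
Qed.
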